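(* Let $J$ be an arbitrary graph and let $m\ge\chi(J)$ be an integer. Then there exists a graph $G$ such that (1) $J$ is an induced subgraph of $G$; (2) $\dim_l(G)=m$; and (3) there exists a local metric basis $B$ of $G$ with $B\cap V(J)=\emptyset$.
   Context: $\chi(J)$ is the chromatic number of $J$. For a connected graph $G$, a vertex $w$ distinguishes an edge $uv$ if $d(w,u)\neq d(w,v)$ (shortest-path distance); a local metric basis of $G$ is a minimum-size set of vertices such that every edge of $G$ is distinguished by one of them, and $\dim_l(G)$ is its size. *)

From mathcomp Require Import all_boot.
Set Implicit Arguments. Unset Strict Implicit. Unset Printing Implicit Defensive.

Section Graphs.
Variable V : finType.
Implicit Types (e : rel V).

Definition simple_graph e := symmetric e /\ irreflexive e.

Definition connected_graph e := forall x y : V, connect e x y.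

Fixpoint walk e (n : nat) (x y : V) : bool :=
  if n is n'.+1 then [exists z, e x z && walk e n' z y] else x == y.

(* shortest-path distance: least n with a walk of length n from x to y.
   In a connected graph it is < #|V|, so searching iota 0 #|V| is exact. *)
Definition dist e (x y : V) : nat := find (fun n => walk e n x y) (iota 0 #|V|).

Definition distinguishes e (w u v : V) : bool := dist e w u != dist e w v.

Definition local_resolving e (B : {set V}) : bool :=
  [forall u, forall v, e u v ==> [exists w in B, distinguishes e w u v]].

Definition local_metric_dim e : nat :=
  \big[minn/#|V|]_(B : {set V} | local_resolving e B) #|B|.

Definition local_metric_basis e (B : {set V}) : bool :=
  local_resolving e B && (#|B| == local_metric_dim e).

Definition colorable e (k : nat) : bool :=
  [exists c : {ffun V -> 'I_k}, [forall x, forall y, e x y ==> (c x != c y)]].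

(* chromatic number: least k with a proper k-colouring (k <= #|V| always
   suffices for a loopless graph) *)
Definition chromatic_number e : nat := find (colorable e) (iota 0 #|V|.+1).

End Graphs.

Definition induced_embedding (T V : finType) (eJ : rel T) (eG : rel V) (f : T -> V) :=
  injective f /\ forall x y, eG (f x) (f y) = eJ x y.

From mathcomp Require Import all_boot.

(* Colour J properly with m colours and put J together with a small gadget X under
   an apex adjacent to every vertex.  All distances are then 0, 1 or 2, so a vertex
   w off an edge uv distinguishes it exactly when w is adjacent to one endpoint
   only.  The gadget is wired to the colour classes of J so that one basis vertex
   per colour resolves every edge inside or leaving J, while the gadget itself
   needs m basis vertices. *)

Set Implicit Arguments.
Unset Strict Implicit.
Unset Printing Implicit Defensive.

Section Distance.
Variables (V : finType) (e : rel V).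

Lemma walk1E x y : walk e 1 x y = e x y.
Proof.
apply/existsP/idP => [[z /andP[exz /eqP <-]] // | exy].
by exists y; rewrite exy eqxx.
Qed.

Lemma dist_eq_walk n x y :
  walk e n x y -> (forall k, k < n -> ~~ walk e k x y) -> n < #|V| ->
  dist e x y = n.
Proof.
move=> wn wlt ltnV; rewrite /dist -(subnKC (ltnW ltnV)) iotaD find_cat size_iota.
have -> : has (fun k => walk e k x y) (iota 0 n) = false.
  by apply/hasP => -[k]; rewrite mem_iota add0n => /wlt /negP.
by rewrite add0n -(subnSK ltnV) /= wn addn0.
Qed.

Lemma dist_apex h :
  symmetric e -> irreflexive e -> (forall v, v != h -> e h v) ->
  forall x y, dist e x y = if x == y then 0 else if e x y then 1 else 2.
Proof.
move=> sym irr hu x y.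
case: eqVneq => [<- | nxy].
  apply: dist_eq_walk => //; first exact: eqxx.
  by apply/card_gt0P; exists x.
case: (boolP (e x y)) => exy.
  apply: dist_eq_walk; [by rewrite walk1E | by case | ].
  by apply/card_gt1P; exists x, y.
have xh : x != h.
  by apply: contraNneq exy => hx; rewrite hx hu // -hx eq_sym.
have yh : y != h by apply: contraNneq exy => ->; rewrite sym hu.
apply: dist_eq_walk.
- apply/existsP; exists h; rewrite sym hu //.
  by apply/existsP; exists y; rewrite hu ?eqxx.
- by case=> [|[|]] //; rewrite walk1E.
- apply/card_gt2P; exists x, y, h; split => //; split => //.
  by rewrite eq_sym.
Qed.

End Distance.

Lemma dist_eq0 (V : finType) (e : rel V) x y : (dist e x y == 0) = (x == y).
Proof.
rewrite /dist; have : 0 < #|V| by apply/card_gt0P; exists x.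
by case: #|V| => // n _ /=; case: (x == y).
Qed.

Lemma dist_refl (V : finType) (e : rel V) x : dist e x x = 0.
Proof. by apply/eqP; rewrite dist_eq0. Qed.

Lemma local_resolving_edge (V : finType) (e : rel V) (B : {set V}) u v :
  local_resolving e B -> e u v -> exists2 w, w \in B & distinguishes e w u v.
Proof.
move=> /forallP /(_ u) /forallP /(_ v) /implyP res /res /existsP [w /andP[]].
by exists w.
Qed.

(* An edge with an endpoint in B is distinguished by that endpoint. *)
Lemma local_resolving_outside (V : finType) (e : rel V) (B : {set V}) :
  irreflexive e ->
  (forall u v, e u v -> u \notin B -> v \notin B ->
     exists2 w, w \in B & distinguishes e w u v) ->
  local_resolving e B.
Proof.
move=> irr res; apply/forallP => u; apply/forallP => v; apply/implyP => euv.
have nuv : u != v by apply: contraTneq euv => ->; rewrite irr.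
have [uB | uB] := boolP (u \in B).
  by apply/existsP; exists u; rewrite uB /distinguishes dist_refl eq_sym dist_eq0.
have [vB | vB] := boolP (v \in B).
  by apply/existsP; exists v; rewrite vB /distinguishes dist_refl dist_eq0 eq_sym.
by have [w wB dw] := res u v euv uB vB; apply/existsP; exists w; rewrite wB.
Qed.

Lemma bigmin_leq (I : eqType) (r : seq I) (P : pred I) (F : I -> nat) x0 i :
  i \in r -> P i -> \big[minn/x0]_(j <- r | P j) F j <= F i.
Proof.
elim: r => [//|a r IH]; rewrite inE big_cons => /orP [/eqP <- | ir] Pi.
  by rewrite Pi geq_minl.
by case: (P a); [rewrite geq_min IH ?orbT | exact: IH].
Qed.

Lemma local_metric_dimE (V : finType) (e : rel V) (B : {set V}) :
  local_resolving e B ->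
  (forall B', local_resolving e B' -> #|B| <= #|B'|) ->
  local_metric_dim e = #|B|.
Proof.
move=> resB minB; apply/eqP; rewrite eqn_leq; apply/andP; split.
  by apply: bigmin_leq; rewrite ?mem_index_enum.
apply: (big_ind (fun k => #|B| <= k)) => //; first exact: max_card.
by move=> a b ha hb; rewrite leq_min ha hb.
Qed.

Lemma colorable_chromatic_number (T : finType) (eJ : rel T) :
  irreflexive eJ -> colorable eJ (chromatic_number eJ).
Proof.
move=> irr; rewrite /chromatic_number.
have hasT : has (colorable eJ) (iota 0 #|T|.+1).
  apply/hasP; exists #|T|; first by rewrite mem_iota add0n ltnSn.
  apply/existsP; exists [ffun x => enum_rank x].
  apply/forallP=> x; apply/forallP=> y; apply/implyP=> exy; rewrite !ffunE.
  by apply: contraTneq exy => /enum_rank_inj ->; rewrite irr.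
have := nth_find 0 hasT; rewrite nth_iota ?add0n //.
by move: hasT; rewrite has_find size_iota.
Qed.

Lemma proper_colouring (T : finType) (eJ : rel T) m :
  irreflexive eJ -> chromatic_number eJ <= m ->
  exists c : T -> 'I_m, forall x y, eJ x y -> c x != c y.
Proof.
move=> irr km; have /existsP [c /forallP c_proper] := colorable_chromatic_number irr.
exists (fun x => widen_ord km (c x)) => x y exy.
by move/forallP: (c_proper x) => /(_ y) /implyP /(_ exy).
Qed.

Definition has_local_extension (T : finType) (eJ : rel T) (m : nat) : Prop :=
  exists (V : finType) (eG : rel V),
    [/\ simple_graph eG, connected_graph eG &
        exists f : T -> V,
          [/\ induced_embedding eJ eG f,
              local_metric_dim eG = m &
              exists B : {set V}, local_metric_basis eG B /\
                                  [disjoint B & [set f x | x : T]]]].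

Section Cone.
Variables (T X : finType) (eJ : rel T) (F : T -> X -> bool) (R : rel X).
Hypotheses (symJ : symmetric eJ) (irrJ : irreflexive eJ).
Hypotheses (symR : symmetric R) (irrR : irreflexive R).

Definition cone : rel (option (T + X)) := fun u v =>
  match u, v with
  | None, None => false
  | None, Some _ | Some _, None => true
  | Some (inl x), Some (inl y) => eJ x y
  | Some (inl x), Some (inr a) | Some (inr a), Some (inl x) => F x a
  | Some (inr a), Some (inr b) => R a b
  end.

Lemma cone_sym : symmetric cone.
Proof. by move=> [[x|a]|] [[y|b]|] //=; rewrite ?symJ ?symR. Qed.

Lemma cone_irr : irreflexive cone.
Proof. by move=> [[x|a]|] //=. Qed.

Lemma cone_connected : connected_graph cone.
Proof.
move=> u v; apply: (@connect_trans _ _ None).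
  by case: u => [u|]; [apply: connect1; case: u | exact: connect0].
by case: v => [v|]; [apply: connect1; case: v | exact: connect0].
Qed.

Lemma dist_cone u v : dist cone u v = if u == v then 0 else if cone u v then 1 else 2.
Proof. by apply: (dist_apex (h := None)) cone_sym cone_irr _ u v; case. Qed.

Lemma distinguishes_cone w u v : w != u -> w != v ->
  distinguishes cone w u v = (cone w u != cone w v).
Proof.
move=> /negbTE wu /negbTE wv; rewrite /distinguishes !dist_cone wu wv.
by case: (cone w u); case: (cone w v).
Qed.

Lemma local_resolving_cone (B : {set option (T + X)}) :
  (forall u v, cone u v -> u \notin B -> v \notin B ->
     exists2 w, w \in B & cone w u != cone w v) ->
  local_resolving cone B.
Proof.
move=> res; apply: local_resolving_outside cone_irr _ => u v uv uB vB.
have [w wB wuv] := res u v uv uB vB; exists w => //.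
by rewrite distinguishes_cone //; [apply: contraNneq uB | apply: contraNneq vB] => <-.
Qed.

Lemma cone_local_extension (B : {set option (T + X)}) m :
  #|B| = m -> local_resolving cone B ->
  (forall B', local_resolving cone B' -> m <= #|B'|) ->
  (forall x, Some (inl x) \notin B) ->
  has_local_extension eJ m.
Proof.
move=> <- resB minB offJ; exists (option (T + X)), cone.
split; [by split; [exact: cone_sym | exact: cone_irr] | exact: cone_connected |].
have dimB := local_metric_dimE resB minB.
exists (fun x => Some (inl x)); split => //; first by split => // x y [].
exists B; split; first by rewrite /local_metric_basis resB dimB eqxx.
rewrite disjoint_sym disjoint_subset; apply/subsetP => _ /imsetP [x _ ->].
by rewrite inE offJ.
Qed.

(* A single vertex sees a triangle at three pairwise distinct distances only if it
   lies on it, and then it sees the other two corners at the same distance 1. *)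
Lemma cone_triangle_card (B : {set option (T + X)}) a b c :
  cone a b -> cone b c -> cone a c -> local_resolving cone B -> 1 < #|B|.
Proof.
move=> ab bc ac resB.
have [w1 w1B d1] := local_resolving_edge resB ab.
have [w2 w2B d2] := local_resolving_edge resB bc.
have [w3 w3B d3] := local_resolving_edge resB ac.
rewrite ltnNge; apply/negP => /card_le1_eqP B1.
have w21 := B1 _ _ w1B w2B; have w31 := B1 _ _ w1B w3B; subst w2 w3.
move: d1 d2 d3; rewrite /distinguishes !dist_cone.
have ne u v : cone u v -> (u == v) = false.
  by move=> uv; apply: contraTF uv => /eqP ->; rewrite cone_irr.
have ba : cone b a by rewrite cone_sym.
have cb : cone c b by rewrite cone_sym.
have ca : cone c a by rewrite cone_sym.
case: (eqVneq w1 a) => [-> | wa]; first by rewrite (ne _ _ ab) (ne _ _ ac) ab ac.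
case: (eqVneq w1 b) => [-> | wb]; first by rewrite (ne _ _ bc) ba bc.
case: (eqVneq w1 c) => [-> | wc]; first by rewrite ca cb.
by case: (cone w1 a); case: (cone w1 b); case: (cone w1 c).
Qed.

End Cone.

Lemma exists_ord_neq m (k : 'I_m) : 1 < m -> exists j : 'I_m, j != k.
Proof.
move=> m1; have : 0 < #|~: [set k]|.
  by rewrite cardsC1 card_ord -ltnS prednK ?(ltnW m1).
by case/card_gt0P => j; rewrite !inE => jk; exists j.
Qed.

Lemma exists_ord_neq2 m (i k : 'I_m) : 2 < m -> exists j : 'I_m, (j != i) && (j != k).
Proof.
move=> m2; have : 0 < #|~: [set i; k]|.
  rewrite -(leq_add2l #|[set i; k]|) cardsC cards2 card_ord addn1.
  by apply: leq_ltn_trans m2; case: (_ != _).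
by case/card_gt0P => j; rewrite !inE negb_or => jk; exists j.
Qed.

Section Extensions.
Variables (T : finType) (eJ : rel T).
Hypotheses (symJ : symmetric eJ) (irrJ : irreflexive eJ).

Lemma local_extension_dim0 (c : T -> 'I_0) : has_local_extension eJ 0.
Proof.
pose R (_ _ : void) := false.
have symR : symmetric R by [].
have irrR : irreflexive R by [].
have resB : local_resolving (cone eJ (fun _ _ => false) R) set0.
  apply: (local_resolving_cone symJ irrJ symR irrR).
  move=> [[x|[]]|]; first by case: (c x).
  by move=> [[y|[]]|] //; case: (c y).
by apply: (cone_local_extension symJ irrJ symR irrR _ resB) => [|B' _|x];
  rewrite ?cards0 ?inE.
Qed.

(* A pendant vertex hung on the apex; the apex alone resolves, as J has no edges. *)
Lemma local_extension_dim1 (c : T -> 'I_1) :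
  (forall x y, eJ x y -> c x != c y) -> has_local_extension eJ 1.
Proof.
move=> c_proper.
pose R (_ _ : unit) := false.
have symR : symmetric R by [].
have irrR : irreflexive R by [].
pose G := cone eJ (fun _ _ => false) R.
have resB : local_resolving G [set None].
  apply: (local_resolving_cone symJ irrJ symR irrR).
  move=> [[x|[]]|] [[y|[]]|] //= exy; rewrite ?inE // => _ _.
  by move: (c_proper x y exy); rewrite !ord1.
apply: (cone_local_extension symJ irrJ symR irrR _ resB) => [|B' resB'|x].
- exact: cards1.
- have [w wB _] := local_resolving_edge resB' (erefl : G None (Some (inr tt))).
  by apply/card_gt0P; exists w.
- by rewrite inE.
Qed.

(* The gadget is an edge {0, 1} joined to the colour classes of J; with the apex
   it spans a triangle, which needs two basis vertices. *)
Lemma local_extension_dim2 (c : T -> 'I_2) :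
  (forall x y, eJ x y -> c x != c y) -> has_local_extension eJ 2.
Proof.
move=> c_proper.
pose F x (i : 'I_2) := c x == i; pose R (i j : 'I_2) := i != j.
have symR : symmetric R by move=> i j; rewrite /R eq_sym.
have irrR : irreflexive R by move=> i; rewrite /R eqxx.
pose B := [set Some (inr i) | i : 'I_2] : {set option (T + 'I_2)}.
have inB i : Some (inr i) \in B by apply: imset_f.
have cardB : #|B| = 2 by rewrite card_imset ?card_ord // => i j [].
have resB : local_resolving (cone eJ F R) B.
  apply: (local_resolving_cone symJ irrJ symR irrR).
  move=> [[x|i]|] [[y|j]|] //= exy uB vB; rewrite ?inB // in uB vB.
  - exists (Some (inr (c x))); rewrite //= /F eqxx (eq_sym (c y)).
    by rewrite (negbTE (c_proper _ _ exy)).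
  - have [j jx] := exists_ord_neq (c x) (erefl : 1 < 2).
    by exists (Some (inr j)); rewrite //= /F (eq_sym (c x)) (negbTE jx).
  - have [j jy] := exists_ord_neq (c y) (erefl : 1 < 2).
    by exists (Some (inr j)); rewrite //= /F (eq_sym (c y)) (negbTE jy).
apply: (cone_local_extension symJ irrJ symR irrR cardB resB) => [B' resB'|x].
  exact: (cone_triangle_card symJ irrJ symR irrR (a := None) (b := Some (inr ord0))
                             (c := Some (inr (lift ord0 ord0))) _ _ _ resB').
by apply/imsetP => -[].
Qed.

Section Matching.
Variables (m : nat) (c : T -> 'I_m).
Hypotheses (c_proper : forall x y, eJ x y -> c x != c y) (m_gt2 : 2 < m).

(* The gadget is the perfect matching (i, true) -- (i, false), i < m; a vertex x of J
   sees the matching edges of all colours but its own.  A matching edge is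
   distinguished only by its own endpoints, which forces m basis vertices. *)
Definition matching_link x (p : 'I_m * bool) := c x != p.1.
Definition matching_edge (p q : 'I_m * bool) := (p.1 == q.1) && (p.2 != q.2).
Let G := cone eJ matching_link matching_edge.

Lemma matching_edge_sym : symmetric matching_edge.
Proof. by move=> [i a] [j b]; rewrite /matching_edge /= eq_sym (eq_sym a). Qed.

Lemma matching_edge_irr : irreflexive matching_edge.
Proof. by move=> [i a]; rewrite /matching_edge /= !eqxx. Qed.

Definition matching_basis : {set option (T + ('I_m * bool))} :=
  [set Some (inr (i, true)) | i : 'I_m].

Lemma card_matching_basis : #|matching_basis| = m.
Proof. by rewrite card_imset ?card_ord // => i j []. Qed.

Lemma local_resolving_matching_basis : local_resolving G matching_basis.
Proof.
have inB i : Some (inr (i, true)) \in matching_basis by apply: imset_f.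
apply: (local_resolving_cone symJ irrJ matching_edge_sym matching_edge_irr).
move=> [[x|[i []]]|] [[y|[j []]]|] //= + uB vB; rewrite ?inB // in uB vB;
  rewrite /matching_link /matching_edge /= ?andbF // => exy.
- exists (Some (inr (c x, true))); rewrite //= /matching_link eqxx.
  by rewrite (eq_sym (c y)) c_proper.
- have [k /andP[kj kx]] := exists_ord_neq2 j (c x) m_gt2.
  exists (Some (inr (k, true))); rewrite //= /matching_link /matching_edge /=.
  by rewrite (eq_sym (c x)) kx (negbTE kj).
- by exists (Some (inr (c x, true))); rewrite //= /matching_link eqxx.
- have [k /andP[ki ky]] := exists_ord_neq2 i (c y) m_gt2.
  exists (Some (inr (k, true))); rewrite //= /matching_link /matching_edge /=.
  by rewrite (eq_sym (c y)) ky (negbTE ki).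
- have [k ki] := exists_ord_neq i (ltnW m_gt2).
  by exists (Some (inr (k, true))); rewrite //= /matching_edge /= (negbTE ki).
- by exists (Some (inr (c y, true))); rewrite //= /matching_link eqxx.
- have [k kj] := exists_ord_neq j (ltnW m_gt2).
  by exists (Some (inr (k, true))); rewrite //= /matching_edge /= (negbTE kj).
Qed.

Lemma local_resolving_matching_meet B i :
  local_resolving G B -> exists b, Some (inr (i, b)) \in B.
Proof.
move=> resB; have edge : G (Some (inr (i, true))) (Some (inr (i, false))).
  by rewrite /= /matching_edge /= eqxx.
have [w wB] := local_resolving_edge resB edge.
have [b /eqP wb | off] := pickP (fun b => w == Some (inr (i, b))).
  by exists b; rewrite -wb.
rewrite (distinguishes_cone _ symJ irrJ matching_edge_sym matching_edge_irr) ?off //.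
case: w {wB} off => [[x|[j b]]|] off;
  rewrite /= /matching_link /matching_edge /= ?eqxx //.
have ji : j != i by apply: contraFneq (off b) => ->.
by rewrite (negbTE ji).
Qed.

Lemma local_resolving_matching_card B : local_resolving G B -> m <= #|B|.
Proof.
move=> resB.
pose col (u : option (T + ('I_m * bool))) :=
  if u is Some (inr (i, _)) then Some i else None.
have cols : [set Some i | i : 'I_m] \subset col @: B.
  apply/subsetP => _ /imsetP [i _ ->].
  have [b ib] := local_resolving_matching_meet i resB.
  by apply/imsetP; exists (Some (inr (i, b))).
apply: leq_trans (leq_trans _ (subset_leq_card cols)) (leq_imset_card _ _).
by rewrite card_imset ?card_ord // => i j [].
Qed.

Lemma local_extension_matching : has_local_extension eJ m.
Proof.
apply: (cone_local_extension symJ irrJ matching_edge_sym matching_edge_irr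
          card_matching_basis local_resolving_matching_basis).
  exact: local_resolving_matching_card.
by move=> x; apply/imsetP => -[].
Qed.

End Matching.

End Extensions.

Theorem lemma8 (T : finType) (eJ : rel T) (m : nat) :
  simple_graph eJ ->
  chromatic_number eJ <= m ->
  exists (V : finType) (eG : rel V),
    [/\ simple_graph eG, connected_graph eG &
        exists f : T -> V,
          [/\ induced_embedding eJ eG f,
              local_metric_dim eG = m &
              exists B : {set V}, local_metric_basis eG B /\
                                  [disjoint B & [set f x | x : T]]]].
Proof.
move=> [symJ irrJ] km.
have [c c_proper] := proper_colouring irrJ km.
case: m c c_proper {km} => [|[|[|m]]] c c_proper.
- exact: (local_extension_dim0 symJ irrJ c).
- exact: (local_extension_dim1 symJ irrJ c_proper).
- exact: (local_extension_dim2 symJ irrJ c_proper).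
- exact: (local_extension_matching symJ irrJ c_proper).
Qed.
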